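(* Let $h$ be a binary function symbol interpreted as associative and idempotent, and let $a,b$ be distinct free constants. Let $t$ be a term of the form $h(t_1,t_2)$ or $h(t_2,t_1)$, where $t_1\in\{a,b\}$ and $t_2$ is an arbitrary term. Then $t$ is not an $AI$-generalization of $h(a,b)$ and $h(b,a)$, i.e. $t\notin \mathcal{G}_{AI}(h(a,b),h(b,a))$.
   Context: Terms are built from a countable set of variables and a set of function symbols with fixed arities; substitutions map variables to terms, are the identity on all but finitely many variables, and are extended homomorphically to terms (written postfix, $t\sigma$). $AI$ denotes the equational theory generated by $h(x,h(y,z)) = h(h(x,y),z)$ and $h(x,x)=x$ (all other symbols free), and $s\approx_{AI} t$ means $s=t$ holds in every model of these axioms. A term $r$ is an $AI$-generalization of terms $s$ and $t$ if there exist substitutions $\sigma,\tau$ with $r\sigma\approx_{AI} s$ and $r\tau\approx_{AI} t$; $\mathcal{G}_{AI}(s,t)$ is the set of all such $r$. *)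

From Stdlib Require Import List.
Import ListNotations.

Section Terms.
Variable F : Type.
Variable ar : F -> nat.

Inductive term : Type :=
| Var : nat -> term
| Fn : F -> list term -> term.

Fixpoint wf (t : term) : Prop :=
  match t with
  | Var _ => True
  | Fn f ts => length ts = ar f /\
      (fix wfl (l : list term) : Prop :=
         match l with [] => True | u :: l' => wf u /\ wfl l' end) ts
  end.

Definition substitution (s : nat -> term) : Prop :=
  (forall x, wf (s x)) /\
  exists dom : list nat, forall x, ~ In x dom -> s x = Var x.

Fixpoint apply_subst (s : nat -> term) (t : term) : term :=
  match t with
  | Var x => s x
  | Fn f ts => Fn f (map (apply_subst s) ts)
  end.

Fixpoint eval {M : Type} (I : F -> list M -> M) (v : nat -> M) (t : term) : M :=
  match t with
  | Var x => v x
  | Fn f ts => I f (map (eval I v) ts)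
  end.

Definition AI_model (h : F) {M : Type} (I : F -> list M -> M) : Prop :=
  (forall x y z : M, I h [x; I h [y; z]] = I h [I h [x; y]; z]) /\
  (forall x : M, I h [x; x] = x).

(* s =_AI t : s = t holds in every model of the AI axioms (all other symbols free) *)
Definition AI_eq (h : F) (s t : term) : Prop :=
  forall (M : Type) (I : F -> list M -> M), AI_model h I ->
  forall v : nat -> M, eval I v s = eval I v t.

Definition AI_generalization (h : F) (r s t : term) : Prop :=
  wf r /\
  exists sigma tau : nat -> term,
    substitution sigma /\ substitution tau /\
    AI_eq h (apply_subst sigma r) s /\ AI_eq h (apply_subst tau r) t.

End Terms.

Arguments Var {F}.
Arguments Fn {F}.

(** Both projection semigroups, [x * y = x] and [x * y = y], are associative
    and idempotent. Interpreting every symbol as the projection on its first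
    argument (a constant as itself) evaluates a term to its leftmost symbol;
    so an AI-equality preserves the leftmost symbol, and every instance of
    [h(t1, t2)] has leftmost symbol [t1], whereas [h(a, b)] and [h(b, a)]
    have leftmost symbols [a] and [b]. The case [h(t2, t1)] is symmetric with
    the rightmost symbol. *)

From Stdlib Require Import List.
Import ListNotations.

Section ProjectionModels.

Variable F : Type.

Definition first_arg (f : F) (args : list F) : F :=
  match args with [] => f | x :: _ => x end.

Definition last_arg (f : F) (args : list F) : F := last args f.

Lemma first_arg_AI_model (h : F) : AI_model F h first_arg.
Proof. split; reflexivity. Qed.

Lemma last_arg_AI_model (h : F) : AI_model F h last_arg.
Proof. split; reflexivity. Qed.

Lemma eval_first_arg_subst_lead_const (f c : F) (ts : list (term F))
    (sigma : nat -> term F) (v : nat -> F) :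
  eval F first_arg v (apply_subst F sigma (Fn f (Fn c [] :: ts))) = c.
Proof. reflexivity. Qed.

Lemma eval_last_arg_subst_last_const (f c : F) (ts : list (term F))
    (sigma : nat -> term F) (v : nat -> F) :
  eval F last_arg v (apply_subst F sigma (Fn f (ts ++ [Fn c []]))) = c.
Proof.
  simpl; rewrite !map_app; apply last_last.
Qed.

Variables (ar : F -> nat) (h : F).

Lemma AI_generalization_lead_const (f c : F) (ts : list (term F))
    (s t : term F) (v : nat -> F) :
  AI_generalization F ar h (Fn f (Fn c [] :: ts)) s t ->
  eval F first_arg v s = c /\ eval F first_arg v t = c.
Proof.
  intros [_ [sigma [tau [_ [_ [Hs Ht]]]]]].
  rewrite <- (Hs F first_arg (first_arg_AI_model h) v),
          <- (Ht F first_arg (first_arg_AI_model h) v).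
  split; apply eval_first_arg_subst_lead_const.
Qed.

Lemma AI_generalization_last_const (f c : F) (ts : list (term F))
    (s t : term F) (v : nat -> F) :
  AI_generalization F ar h (Fn f (ts ++ [Fn c []])) s t ->
  eval F last_arg v s = c /\ eval F last_arg v t = c.
Proof.
  intros [_ [sigma [tau [_ [_ [Hs Ht]]]]]].
  rewrite <- (Hs F last_arg (last_arg_AI_model h) v),
          <- (Ht F last_arg (last_arg_AI_model h) v).
  split; apply eval_last_arg_subst_last_const.
Qed.

End ProjectionModels.

Theorem lemma2 (F : Type) (ar : F -> nat) (h a b : F)
  (Hh : ar h = 2) (Ha : ar a = 0) (Hb : ar b = 0) (Hab : a <> b)
  (t1 : F) (t2 t : term F)
  (Ht1 : t1 = a \/ t1 = b)
  (Ht2 : wf F ar t2)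
  (Ht : t = Fn h [Fn t1 []; t2] \/ t = Fn h [t2; Fn t1 []]) :
  ~ AI_generalization F ar h t
      (Fn h [Fn a []; Fn b []]) (Fn h [Fn b []; Fn a []]).
Proof.
  intros Hgen.
  destruct Ht as [-> | ->].
  - destruct (AI_generalization_lead_const F ar h h t1 [t2] _ _ (fun _ => a) Hgen)
      as [Ha1 Hb1].
    simpl in Ha1, Hb1; congruence.
  - destruct (AI_generalization_last_const F ar h h t1 [t2] _ _ (fun _ => a) Hgen)
      as [Hb1 Ha1].
    simpl in Ha1, Hb1; congruence.
Qed.
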